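(* Let $k\ge 1$. The square complex orthogonal designs $\mathcal{C}_k$ and $\mathcal{C}_k^-$ induce two non-equivalent irreducible representations of dimension $2^{k-1}$ of the group $\mathcal{G}_{2k-1}$.
   Context: Let $z_1,\ldots,z_k$ be formal complex indeterminates, with $z_i^*$ the complex conjugate. Define recursively $\mathcal{C}_1=(z_1)$ and, for $k>1$, the $2^{k-1}\times 2^{k-1}$ matrix $\mathcal{C}_k=\begin{pmatrix}\mathcal{C}_{k-1} & z_k I_{2^{k-2}}\\ -z_k^* I_{2^{k-2}} & \mathcal{C}_{k-1}^H\end{pmatrix}$, and let $\mathcal{C}_k^-$ be obtained from $\mathcal{C}_k$ by replacing $z_k$ with $z_k^*$. Both satisfy $\mathcal{C}^H\mathcal{C}=(\sum_i|z_i|^2)I$. For $m\ge 0$, $\mathcal{G}_{m}$ denotes the group of order $2^{m+1}$ generated by $g_1,\ldots,g_m$ and a central element $-1$ of order $2$, subject to $g_i^2=-1$ and $g_ig_j=-g_jg_i$ for $i\ne j$; its elements are $\pm\prod_{i\in S}g_i$, $S\subseteq\{1,\ldots,m\}$. Representation induced by a square design: write a square design $\mathcal{O}$ of size $n$ in the $k$ variables as $\mathcal{O}=\sum_{i=1}^k(z_iA_i+z_i^*B_i)$ with $A_i,B_i\in M_n(\mathbb{C})$; with $z_i=x_i+\sqrt{-1}y_i$ this is $\sum_{i=1}^k x_iF_i+\sum_{i=1}^k y_iF_{k+i}$ where $F_i=A_i+B_i$, $F_{k+i}=\sqrt{-1}(A_i-B_i)$. Set $E_{j}=F_{j+1}$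 for $j=0,\ldots,2k-1$ (these are unitary and satisfy $E_i^HE_j+E_j^HE_i=0$ for $i\neq j$), and $G_i=E_0^HE_i$ for $i=1,\ldots,2k-1$. The induced representation $\rho:\mathcal{G}_{2k-1}\to U_n(\mathbb{C})$ is the homomorphism with $\rho(g_i)=G_i$ and $\rho(-1)=-I_n$. *)

From HB Require Import structures.
From mathcomp Require Import all_boot all_order all_algebra.
Set Implicit Arguments. Unset Strict Implicit. Unset Printing Implicit Defensive.
Import Order.TTheory GRing.Theory Num.Theory.
Local Open Scope ring_scope.

(* Complex field: an arbitrary numClosedFieldType C (e.g. algC, or R[i] for
   R : rcfType); conjugation is Num.conj (notation z^* ), 'i is Num.i. *)

Section Designs.
Variable C : numClosedFieldType.

Definition mxH (n : nat) (A : 'M[C]_n) : 'M[C]_n := (map_mx Num.conj A)^T.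

(* A square design of size n in the variables z_0, z_1, ... (0-indexed) is
   given by its coefficient matrices: O = \sum_i (z_i A_i + z_i^* B_i);
   D i = (A_i, B_i). (Only finitely many indices are nonzero.) *)
Definition design (n : nat) := nat -> 'M[C]_n * 'M[C]_n.

(* Conjugate transpose of a design: (z A + z^* B)^H = z^* A^H + z B^H *)
Definition designH n (D : design n) : design n :=
  fun i => (mxH (D i).2, mxH (D i).1).

(* size of C_{k+1} : 2^k, given with the block structure *)
Fixpoint sz (k : nat) : nat := if k is k'.+1 then sz k' + sz k' else 1.

(* Cdes k = the design C_{k+1} in variables z_1..z_{k+1} (stored at 0..k) *)
Fixpoint Cdes (k : nat) : design (sz k) :=
  match k with
  | 0 => fun i => if i == 0%N then (1%:M, 0) else (0, 0)
  | k'.+1 => fun i =>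
      if (i < k'.+1)%N then
        (block_mx (Cdes k' i).1 0 0 (designH (Cdes k') i).1,
         block_mx (Cdes k' i).2 0 0 (designH (Cdes k') i).2)
      else if i == k'.+1 then
        (block_mx 0 1%:M 0 0, block_mx 0 0 (- 1%:M) 0)
      else (0, 0)
  end.

(* C^-_{k+1}: replace the last variable z_{k+1} by its conjugate, i.e.
   swap its coefficient matrices A and B *)
Definition Cminus (k : nat) : design (sz k) :=
  fun i => if i == k then ((Cdes k i).2, (Cdes k i).1) else Cdes k i.

(* F_1..F_{2k}, reindexed as E_0..E_{2k-1} (E_j = F_{j+1}), for a design in
   k variables *)
Definition Emx n (k : nat) (D : design n) (j : nat) : 'M[C]_n :=
  if (j < k)%N then (D j).1 + (D j).2
  else 'i *: ((D (j - k)%N).1 - (D (j - k)%N).2).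

(* G_i = E_0^H E_i, i = 1..2k-1; generator g_{i+1} is indexed by i : 'I_m,
   m = 2k-1 *)
Definition Gmx n k (D : design n) (i : 'I_(2 * k).-1) : 'M[C]_n :=
  mxH (Emx k D 0) *m Emx k D i.+1.

End Designs.

(* The group G_m: elements  (-1)^s * prod_{i in S} g_i  (product in increasing
   order of indices), encoded as (s, S). *)
Definition Gelt (m : nat) := (bool * {set 'I_m})%type.

(* Group law in this normal form:
   g_S g_T = (-1)^(#{(i,j) in S x T | j < i} + #(S :&: T)) g_(S Delta T)
   (using g_i^2 = -1 and g_i g_j = - g_j g_i for i <> j). *)
Definition Gmul m (x y : Gelt m) : Gelt m :=
  let: (s, A) := x in let: (t, B) := y in
  (s (+) t (+) odd (#|[set p in setX A B | (p.2 < p.1)%N]| + #|A :&: B|),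
   (A :\: B) :|: (B :\: A)).

Section Reps.
Variable C : numClosedFieldType.

Definition rho_of n m (G : 'I_m -> 'M[C]_n) (x : Gelt m) : 'M[C]_n :=
  let: (s, A) := x in (-1) ^+ s *: \big[mulmx/1%:M]_(i in A) G i.

Definition is_unitary_rep n m (G : 'I_m -> 'M[C]_n) : Prop :=
  (forall x y, rho_of G (Gmul x y) = rho_of G x *m rho_of G y) /\
  (forall x, rho_of G x *m mxH (rho_of G x) = 1%:M).

(* irreducible: n > 0 and no proper nonzero subspace of C^n (column vectors)
   invariant under all rho(x); a subspace is the row space of U, and
   invariance of columns under v |-> rho(x) v is  U rho(x)^T <= U. *)
Definition irreducible_rep n m (G : 'I_m -> 'M[C]_n) : Prop :=
  (0 < n)%N /\
  forall U : 'M[C]_n,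
    (forall x, (U *m (rho_of G x)^T <= U)%MS) ->
    \rank U = 0%N \/ \rank U = n.

Definition equivalent_reps n m (G1 G2 : 'I_m -> 'M[C]_n) : Prop :=
  exists P : 'M[C]_n, P \in unitmx /\
    forall x, P *m rho_of G1 x = rho_of G2 x *m P.

End Reps.
Arguments Gmx {C n} k D i.

From HB Require Import structures.
From mathcomp Require Import all_boot all_order all_algebra zify.
Set Implicit Arguments. Unset Strict Implicit. Unset Printing Implicit Defensive.
Import Order.TTheory GRing.Theory Num.Theory.
Local Open Scope ring_scope.

(* The coefficient matrices E_0, ..., E_(2k-1) of C_k satisfy the Hurwitz-Radon
   relations E_a^H E_b + E_b^H E_a = 2 delta_ab I = E_a E_b^H + E_b E_a^H, by
   induction along the block recursion.  Hence the G_i = E_0^H E_i are unitary,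
   square to -1 and pairwise anticommute, which is what makes rho a unitary
   representation; passing to C_k^- only negates the last generator.  With
   N = 2k-2, the 2^N products of subsets of G_1, ..., G_N are orthonormal for the
   trace form (a nontrivial product anticommutes with some generator, so it is
   traceless), hence they span all matrices of size 2^(k-1).  Therefore an
   invariant subspace is invariant under every matrix, and an intertwiner
   commutes with every matrix, in particular with the product Z of all the
   generators; since the two representations send Z to Z and -Z, it is 0. *)

Section Adjoint.
Variable C : numClosedFieldType.
Implicit Types n : nat.

Lemma mxHD n (A B : 'M[C]_n) : mxH (A + B) = mxH A + mxH B.
Proof. by rewrite /mxH map_mxD linearD. Qed.

Lemma mxHN n (A : 'M[C]_n) : mxH (- A) = - mxH A.
Proof. by rewrite /mxH map_mxN linearN. Qed.

Lemma mxHB n (A B : 'M[C]_n) : mxH (A - B) = mxH A - mxH B.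
Proof. by rewrite mxHD mxHN. Qed.

Lemma mxHZ n c (A : 'M[C]_n) : mxH (c *: A) = c^* *: mxH A.
Proof. by rewrite /mxH map_mxZ linearZ. Qed.

Lemma mxHM n (A B : 'M[C]_n) : mxH (A *m B) = mxH B *m mxH A.
Proof. by rewrite /mxH map_mxM trmx_mul. Qed.

Lemma mxH_scalar n c : mxH (c%:M : 'M[C]_n) = c^*%:M.
Proof. by rewrite /mxH map_scalar_mx tr_scalar_mx. Qed.

Lemma mxH1 n : mxH (1%:M : 'M[C]_n) = 1%:M.
Proof. by rewrite mxH_scalar conjC1. Qed.

Lemma mxH0 n : mxH (0 : 'M[C]_n) = 0.
Proof. by rewrite /mxH map_mx0 trmx0. Qed.

Lemma mxHK n : involutive (@mxH C n).
Proof. by move=> A; apply/matrixP => i j; rewrite !mxE conjCK. Qed.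

Lemma mxH_block s (A B D E : 'M[C]_s) :
  mxH (block_mx A B D E) = block_mx (mxH A) (mxH D) (mxH B) (mxH E).
Proof. by rewrite /mxH map_block_mx tr_block_mx. Qed.

End Adjoint.

HB.instance Definition _ (R : pzRingType) (n : nat) :=
  Monoid.isLaw.Build 'M[R]_n 1%:M (@mulmx R n n n)
    (@mulmxA R n n n n) (@mul1mx R n n) (@mulmx1 R n n).

Definition inversions m (A B : {set 'I_m}) : nat :=
  #|[set p in setX A B | (p.2 < p.1)%N]|.

Definition symdiff m (A B : {set 'I_m}) : {set 'I_m} := (A :\: B) :|: (B :\: A).

Lemma in_symdiff m (A B : {set 'I_m}) i : (i \in symdiff A B) = (i \in A) (+) (i \in B).
Proof. by rewrite !inE; case: (i \in A); case: (i \in B). Qed.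

Lemma symdiffK m (A B : {set 'I_m}) : symdiff A (symdiff A B) = B.
Proof. by apply/setP => i; rewrite !in_symdiff; case: (i \in A); case: (i \in B). Qed.

Lemma preimset_symdiff m (A B : {set 'I_m.+1}) :
  lift ord0 @^-1: symdiff A B = symdiff (lift ord0 @^-1: A) (lift ord0 @^-1: B).
Proof. by apply/setP => i; rewrite !inE. Qed.

Lemma card_lift_recl m (A : {set 'I_m.+1}) :
  #|A| = ((ord0 \in A) + #|lift ord0 @^-1: A|)%N.
Proof.
rewrite -!sum1_card big_mkcond big_ord_recl /= [in RHS]big_mkcond /=.
by congr addn; apply: eq_bigr => i _; rewrite inE.
Qed.

Lemma inversions_recl m (A B : {set 'I_m.+1}) :
  inversions A B = ((ord0 \in B) * #|lift ord0 @^-1: A|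
                    + inversions (lift ord0 @^-1: A) (lift ord0 @^-1: B))%N.
Proof.
have sum_pairs m' (X Y : {set 'I_m'}) :
    inversions X Y = (\sum_a \sum_b ((a \in X) && (b \in Y) && (b < a)%N))%N.
  rewrite /inversions -sum1_card big_mkcond pair_big /=.
  by apply: eq_bigr => -[a b] _; rewrite !inE /=; case: (_ && _).
rewrite !sum_pairs big_ord_recl /= big1 ?add0n; last first.
  by move=> b _; rewrite ltn0 andbF.
rewrite -sum1_card [X in (_ * X)%N]big_mkcond big_distrr /= -big_split /=.
apply: eq_bigr => a _; rewrite big_ord_recl /= !inE.
by case: (lift ord0 a \in A); case: (ord0 \in B) => /=;
  congr addn; apply: eq_bigr => b _; rewrite inE.
Qed.

Lemma Gmul_sign_recl m (A B : {set 'I_m.+1}) :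
  let A' := lift ord0 @^-1: A in let B' := lift ord0 @^-1: B in
  (inversions A B + #|A :&: B|)%N =
  ((ord0 \in B) * #|A'| + ((ord0 \in A) && (ord0 \in B))
   + (inversions A' B' + #|A' :&: B'|))%N.
Proof.
rewrite /= inversions_recl (card_lift_recl (A :&: B)).
have -> : lift ord0 @^-1: (A :&: B) = lift ord0 @^-1: A :&: lift ord0 @^-1: B.
  by apply/setP => i; rewrite !inE.
by rewrite inE; case: (_ && _) => /=; lia.
Qed.

Section Products.
Variables (C : numClosedFieldType) (n : nat).
Implicit Types (m : nat) (X : 'M[C]_n).

Definition mxprod m (G : 'I_m -> 'M[C]_n) (A : {set 'I_m}) : 'M[C]_n :=
  \big[mulmx/1%:M]_(i in A) G i.

Lemma rho_ofE m (G : 'I_m -> 'M[C]_n) s A : rho_of G (s, A) = (-1) ^+ s *: mxprod G A.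
Proof. by []. Qed.

Lemma mxprod_commute m (G : 'I_m -> 'M[C]_n) X (c : 'I_m -> C) :
  (forall i, X *m G i = c i *: (G i *m X)) ->
  forall A, X *m mxprod G A = (\prod_(i in A) c i) *: (mxprod G A *m X).
Proof.
move=> XG A; rewrite /mxprod; elim/big_rec2: _ => [|i Y p _ IH].
  by rewrite mulmx1 mul1mx scale1r.
by rewrite mulmxA XG -scalemxAl -mulmxA IH -scalemxAr scalerA mulmxA.
Qed.

Lemma mxprod_anticommute m (G : 'I_m -> 'M[C]_n) X :
  (forall i, X *m G i = - (G i *m X)) ->
  forall A, X *m mxprod G A = (-1) ^+ #|A| *: (mxprod G A *m X).
Proof.
move=> XG A; rewrite (mxprod_commute (c := fun=> -1)) ?prodr_const //.
by move=> i; rewrite XG scaleN1r.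
Qed.

Lemma mxprod_scale m (G G' : 'I_m -> 'M[C]_n) (c : 'I_m -> C) :
  (forall i, G' i = c i *: G i) ->
  forall A, mxprod G' A = (\prod_(i in A) c i) *: mxprod G A.
Proof.
move=> GG' A; rewrite /mxprod; elim/big_rec3: _ => [|i p Y Z _ ->].
  by rewrite scale1r.
by rewrite GG' -scalemxAl -scalemxAr scalerA.
Qed.

Lemma mxprod_recl m (G : 'I_m.+1 -> 'M[C]_n) A :
  mxprod G A = (if ord0 \in A then G ord0 else 1%:M)
               *m mxprod (fun i => G (lift ord0 i)) (lift ord0 @^-1: A).
Proof.
rewrite /mxprod big_mkcond big_ord_recl /=; congr (_ *m _).
by rewrite [RHS]big_mkcond; apply: eq_bigr => i _; rewrite inE.
Qed.

Lemma mxprod_unitary m (G : 'I_m -> 'M[C]_n) :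
  (forall i, G i *m mxH (G i) = 1%:M) ->
  forall A, mxprod G A *m mxH (mxprod G A) = 1%:M.
Proof.
move=> GU A; rewrite /mxprod; elim/big_rec: _ => [|i Y _ IH].
  by rewrite mxH1 mulmx1.
by rewrite mxHM mulmxA -(mulmxA (G i)) IH mulmx1 GU.
Qed.

Definition clifford m (G : 'I_m -> 'M[C]_n) :=
  [/\ forall i, G i *m G i = - 1%:M,
      forall i j, i != j -> G i *m G j = - (G j *m G i) &
      forall i, G i *m mxH (G i) = 1%:M].

Lemma mxprodM m (G : 'I_m -> 'M[C]_n) :
  (forall i, G i *m G i = - 1%:M) ->
  (forall i j, i != j -> G i *m G j = - (G j *m G i)) ->
  forall A B, mxprod G A *m mxprod G B =
    (-1) ^+ (inversions A B + #|A :&: B|) *: mxprod G (symdiff A B).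
Proof.
elim: m G => [|m IH] G Gsq Ganti A B.
  have mxprod0 S : mxprod G S = 1%:M by rewrite /mxprod big_mkcond big_ord0.
  have card0 (T : finType) (S : {set T}) : #|T| = 0%N -> #|S| = 0%N.
    by move=> T0; apply/eqP; rewrite -leqn0 -T0 max_card.
  by rewrite !mxprod0 mul1mx /inversions !card0 ?card_prod ?card_ord ?scale1r.
set G' := fun i => G (lift ord0 i).
have G'anti i j : i != j -> G' i *m G' j = - (G' j *m G' i).
  by move=> ij; apply: Ganti; rewrite (inj_eq (@lift_inj _ ord0)).
have IH' := IH G' (fun i => Gsq _) G'anti.
have G0G' S : mxprod G' S *m G ord0 = (-1) ^+ #|S| *: (G ord0 *m mxprod G' S).
  rewrite (mxprod_anticommute (fun i => Ganti _ _ (neq_lift ord0 i))).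
  by rewrite scalerA -exprD addnn -signr_odd odd_double scale1r.
rewrite !(mxprod_recl G) Gmul_sign_recl preimset_symdiff in_symdiff -/G'.
case: (ord0 \in A); case: (ord0 \in B);
  rewrite /= ?mul1mx ?mul0n ?mul1n ?addn0 ?add0n.
- rewrite -mulmxA (mulmxA (mxprod G' _)) G0G' -scalemxAl -scalemxAr !mulmxA.
  rewrite Gsq !mulNmx mul1mx -scaleN1r scalerA IH' scalerA -exprSr -exprD.
  by rewrite addn1.
- by rewrite -mulmxA IH' -scalemxAr.
- by rewrite mulmxA G0G' -scalemxAl -mulmxA IH' -scalemxAr scalerA -exprD.
- by rewrite IH'.
Qed.

Lemma clifford_unitary_rep m (G : 'I_m -> 'M[C]_n) : clifford G -> is_unitary_rep G.
Proof.
case=> Gsq Ganti GU; split.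
  move=> [s A] [t B]; rewrite /Gmul !rho_ofE -scalemxAl -scalemxAr scalerA.
  by rewrite mxprodM // scalerA !signr_addb signr_odd.
move=> [s A]; rewrite rho_ofE mxHZ rmorph_sign -scalemxAl -scalemxAr scalerA.
by rewrite mxprod_unitary // -signr_addb addbb scale1r.
Qed.

End Products.

Section Generators.
Variables (C : numClosedFieldType) (n m : nat).
Implicit Types G : 'I_m -> 'M[C]_n.

Lemma mxprod_flip G G' l :
  (forall i, G' i = if i == l then - G i else G i) ->
  forall A, mxprod G' A = (-1) ^+ (l \in A) *: mxprod G A.
Proof.
move=> GG' A; rewrite (mxprod_scale (G := G) (c := fun i => if i == l then -1 else 1)); last first.
  by move=> i; rewrite GG'; case: (i == l); rewrite ?scaleN1r ?scale1r.
congr (_ *: _); case: (boolP (l \in A)) => lA; last first.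
  by rewrite big1 // => i iA; case: eqP iA => // ->; rewrite (negPf lA).
rewrite (big_setD1 l lA) eqxx big1 => [|i]; first by rewrite /= mulr1.
by rewrite !inE => /andP[/negPf ->].
Qed.

Lemma clifford_flip G G' l :
  (forall i, G' i = if i == l then - G i else G i) -> clifford G -> clifford G'.
Proof.
move=> GG' [Gsq Ganti GU]; split.
- by move=> i; rewrite GG'; case: (i == l); rewrite ?mulNmx ?mulmxN ?opprK.
- move=> i j ij; rewrite !GG'; case: (i == l); case: (j == l);
  by rewrite ?mulNmx ?mulmxN ?opprK Ganti ?opprK.
- by move=> i; rewrite GG'; case: (i == l); rewrite ?mxHN ?mulNmx ?mulmxN ?opprK.
Qed.

Lemma gen_mxprod_commute G (R : {set 'I_m}) j :
  (forall i k, i != k -> G i *m G k = - (G k *m G i)) ->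
  G j *m mxprod G R = (-1) ^+ #|R :\ j| *: (mxprod G R *m G j).
Proof.
move=> Ganti.
rewrite (mxprod_commute (c := fun i => if i == j then 1 else -1)); last first.
  move=> i; case: eqP => [->|/eqP ij]; first by rewrite scale1r.
  by rewrite Ganti 1?eq_sym // scaleN1r.
congr (_ *: _); rewrite (big_setID [set j]) /= big1 => [|i]; last first.
  by rewrite !inE => /andP[_ /eqP ->]; rewrite eqxx.
rewrite mul1r -prodr_const; apply: eq_bigr => i.
by rewrite !inE => /andP[/negPf -> _].
Qed.

(* Some generator anticommutes with mxprod G R: one outside R if #|R| is odd,
   one inside R otherwise; so the trace is both preserved and negated by
   conjugation with it. *)
Lemma trace_mxprod_eq0 G (R : {set 'I_m}) l :
  clifford G -> R != set0 -> l \notin R -> \tr (mxprod G R) = 0.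
Proof.
case=> _ Ganti GU R0 lR.
have [j oddRj] : exists j, odd #|R :\ j|.
  case: (boolP (odd #|R|)) => oR.
    by exists l; rewrite (cardsD1 l R) (negPf lR) in oR.
  case/set0Pn: R0 => j jR; exists j.
  by move: oR; rewrite (cardsD1 j R) jR negbK.
have Gj_anti := gen_mxprod_commute R j Ganti.
rewrite -signr_odd oddRj expr1 scaleN1r in Gj_anti.
have trN : \tr (mxprod G R) = - \tr (mxprod G R).
  rewrite -{1}(mul1mx (mxprod G R)) -(mulmx1C (GU j)) -mulmxA Gj_anti.
  by rewrite mulmxN raddfN /= mxtrace_mulC -mulmxA GU mulmx1.
have : \tr (mxprod G R) *+ 2 == 0 by rewrite mulr2n {1}trN addNr.
by rewrite mulrn_eq0 => /eqP.
Qed.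

End Generators.

Lemma mxvec_dotE (R : pzRingType) n (A B : 'M[R]_n) :
  \sum_j mxvec A 0 j * mxvec B 0 j = \tr (A *m B^T).
Proof.
have -> : \tr (A *m B^T) = \sum_i \sum_k A i k * B i k.
  by apply: eq_bigr => i _; rewrite !mxE; apply: eq_bigr => k _; rewrite !mxE.
rewrite (reindex _ (curry_mxvec_bij _ _)) pair_big /=.
by apply: eq_bigr => -[i k] _; rewrite !mxvecE.
Qed.

Lemma rank_stable_under_all (C : fieldType) n (U : 'M[C]_n) :
  (forall Y, (U *m Y <= U)%MS) -> \rank U = 0%N \/ \rank U = n.
Proof.
move=> HU; have [->|/matrix0Pn[i [j Uij]]] := eqVneq U 0.
  by left; rewrite mxrank0.
right; apply/eqP; rewrite -/(row_full U) -sub1mx mx1_sum_delta.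
apply: summx_sub => l _; rewrite -(mul_delta_mx i).
apply: submx_trans (submxMl _ _) _.
have -> : delta_mx i l = (U i j)^-1 *: (delta_mx i i *m (U *m delta_mx j l)).
  apply/matrixP => a b; rewrite !mxE (bigD1 i) //= big1 => [|c /negPf ci]; last first.
    by rewrite !mxE ci andbF mul0r.
  rewrite !mxE (bigD1 j) //= big1 => [|d /negPf dj]; last by rewrite !mxE dj mulr0.
  rewrite !mxE !eqxx /= !addr0.
  by case: (a == i); case: (b == l); rewrite /= ?(mulr1, mul1r, mulr0, mul0r) ?mulVf.
by apply: scalemx_sub; rewrite (submx_trans (submxMl _ _) (HU _)).
Qed.

Section Spanning.
Variables (C : numClosedFieldType) (n N : nat) (G : 'I_N.+1 -> 'M[C]_n).
Hypotheses (HG : clifford G) (dim_n : (n * n = 2 ^ N)%N).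

Lemma dim_gt0 : (0 < n)%N.
Proof. by move: dim_n; case: n => //= /esym/eqP; rewrite expn_eq0. Qed.

Definition widen_set (S : {set 'I_N}) : {set 'I_N.+1} :=
  [set widen_ord (leqnSn N) i | i in S].

Lemma ord_max_notin_widen S : ord_max \notin widen_set S.
Proof.
by apply/imsetP => -[i _ /(congr1 val)] /= iN; have := ltn_ord i; rewrite -iN ltnn.
Qed.

Lemma widen_set_inj : injective widen_set.
Proof. by apply: imset_inj => i j /(congr1 val) /= /val_inj. Qed.

Local Notation M S := (mxprod G (widen_set S)).

Lemma trace_mxprod_orthonormal S1 S2 :
  \tr (mxH (M S1) *m M S2) = (S1 == S2)%:R * n%:R.
Proof.
case: (HG) => Gsq Ganti GU.
have MU X : mxH (mxprod G X) *m mxprod G X = 1%:M.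
  by apply/mulmx1C/mxprod_unitary.
case: eqP => [->|S12]; first by rewrite MU mxtrace1 mul1r.
set A := widen_set S1; set B := symdiff A (widen_set S2).
have := mxprodM Gsq Ganti A B; rewrite /B symdiffK => MAB.
have -> : M S2 = (-1) ^+ (inversions A B + #|A :&: B|) *: (mxprod G A *m mxprod G B).
  by rewrite MAB scalerA -exprD addnn -signr_odd odd_double scale1r.
rewrite -scalemxAr mulmxA MU mul1mx mxtraceZ (trace_mxprod_eq0 (l := ord_max)) //.
- by rewrite mulr0 mul0r.
- apply/eqP => B0; apply: S12; apply: widen_set_inj; apply/setP => i.
  by move/setP/(_ i): B0; rewrite in_symdiff inE; case: (i \in A); case: (i \in _).
- by rewrite in_symdiff !(negPf (ord_max_notin_widen _)).
Qed.

Definition widen_basis_mx : 'M[C]_(#|{set 'I_N}|, n * n) :=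
  \matrix_(s, j) mxvec (M (enum_val s)) 0 j.

Lemma widen_basis_full : row_full widen_basis_mx.
Proof.
pose dual : 'M[C]_(n * n, #|{set 'I_N}|) :=
  \matrix_(j, t) mxvec (mxH (M (enum_val t)))^T 0 j.
have dualE : widen_basis_mx *m dual = n%:R%:M.
  apply/matrixP => s t; rewrite !mxE.
  under eq_bigr => j _ do rewrite !mxE.
  rewrite mxvec_dotE trmxK mxtrace_mulC trace_mxprod_orthonormal.
  by rewrite (inj_eq enum_val_inj) eq_sym; case: (s == t); rewrite ?mul1r ?mul0r.
have rank_dual : \rank (widen_basis_mx *m dual) = #|{set 'I_N}|.
  by rewrite dualE -scalemx1 mxrank_scale_nz ?mxrank1 // pnatr_eq0 -lt0n dim_gt0.
have card_sets : #|{set 'I_N}| = (n * n)%N.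
  by rewrite -cardsT -powersetT card_powerset cardsT card_ord dim_n.
apply/eqP/anti_leq; rewrite rank_leq_col /= -[X in (X <= _)%N]card_sets.
by rewrite -[X in (X <= _)%N]rank_dual mxrankM_maxl.
Qed.

Lemma mxprod_widen_span (X : 'M[C]_n) :
  exists w : 'rV[C]_#|{set 'I_N}|, X = \sum_t w 0 t *: M (enum_val t).
Proof.
have /submxP[w Xw] : (mxvec X <= widen_basis_mx)%MS.
  exact/submx_full/widen_basis_full.
exists w; rewrite -[X]mxvecK Xw mulmx_sum_row linear_sum; apply: eq_bigr => t _.
rewrite linearZ /=; congr (_ *: _); rewrite -[M _]mxvecK; congr vec_mx.
by apply/rowP => j; rewrite !mxE.
Qed.

Lemma commute_widen_all (Q : 'M[C]_n) :
  (forall S, Q *m M S = M S *m Q) -> forall X, Q *m X = X *m Q.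
Proof.
move=> QM X; have [w ->] := mxprod_widen_span X.
rewrite mulmx_sumr mulmx_suml; apply: eq_bigr => t _.
by rewrite -scalemxAr -scalemxAl QM.
Qed.

Lemma stable_widen_all (U : 'M[C]_n) :
  (forall S, (U *m (M S)^T <= U)%MS) -> forall Y, (U *m Y <= U)%MS.
Proof.
move=> UM Y; have [w Yw] := mxprod_widen_span Y^T.
rewrite -[Y]trmxK Yw linear_sum mulmx_sumr; apply: summx_sub => t _.
by rewrite linearZ /= -scalemxAr; apply: scalemx_sub.
Qed.

Lemma clifford_irreducible : irreducible_rep G.
Proof.
split=> [|U HU]; first exact: dim_gt0.
apply/rank_stable_under_all/stable_widen_all => S.
by have := HU (false, widen_set S); rewrite rho_ofE scale1r.
Qed.

Variable G' : 'I_N.+1 -> 'M[C]_n.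
Hypothesis flip : forall i, G' i = if i == ord_max then - G i else G i.

Lemma rho_of_flip A :
  rho_of G' (false, A) = (-1) ^+ (ord_max \in A) *: rho_of G (false, A).
Proof. by rewrite !rho_ofE !scale1r (mxprod_flip flip). Qed.

Lemma flip_irreducible : irreducible_rep G'.
Proof.
split=> [|U HU]; first exact: dim_gt0.
apply/rank_stable_under_all/stable_widen_all => S.
have := HU (false, widen_set S).
by rewrite rho_of_flip (negPf (ord_max_notin_widen S)) rho_ofE !scale1r.
Qed.

Lemma flip_not_equivalent : ~ equivalent_reps G G'.
Proof.
case=> Q [Qunit QG].
have QM S : Q *m M S = M S *m Q.
  have := QG (false, widen_set S).
  by rewrite rho_of_flip (negPf (ord_max_notin_widen S)) !rho_ofE !scale1r.
set Z := mxprod G setT.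
have QZ : Q *m Z = - (Z *m Q).
  have := QG (false, setT).
  by rewrite rho_of_flip inE !rho_ofE !scale1r expr1 scaleN1r mulNmx.
have : (2%:R : C) *: (Z *m Q) == 0.
  by rewrite scaler_nat mulr2n -{1}(commute_widen_all QM) QZ addNr.
rewrite scaler_eq0 pnatr_eq0 /= => /eqP ZQ0.
have Q0 : Q = 0.
  case: HG => _ _ GU.
  rewrite -(mul1mx Q) -(mulmx1C (mxprod_unitary GU setT)) -mulmxA.
  by rewrite ZQ0 mulmx0.
have := mulVmx Qunit; rewrite Q0 mulmx0 => /matrixP/(_ (Ordinal dim_gt0) (Ordinal dim_gt0)).
by rewrite !mxE eqxx /= => /eqP; rewrite eq_sym oner_eq0.
Qed.

End Spanning.

Section HurwitzRadon.
Variable C : numClosedFieldType.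
Implicit Types s : nat.

Definition hr_pair s (X Y : 'M[C]_s) (d : C) :=
  mxH X *m Y + mxH Y *m X = d%:M /\ X *m mxH Y + Y *m mxH X = d%:M.

Definition hurwitz_radon s (E : nat -> 'M[C]_s) (K : nat) :=
  forall a b, (a < K)%N -> (b < K)%N ->
    hr_pair (E a) (E b) (if a == b then 2 else 0).

Lemma hr_pair_sym s (X Y : 'M[C]_s) d : hr_pair X Y d -> hr_pair Y X d.
Proof. by case=> XY YX; split; rewrite addrC. Qed.

Definition diag_adj s (X : 'M[C]_s) : 'M[C]_(s + s) := block_mx X 0 0 (mxH X).

(* The coefficients of the real and imaginary parts of the new variable z_k
   in the block recursion defining C_k. *)
Definition Jre s : 'M[C]_(s + s) := block_mx 0 1%:M (- 1%:M) 0.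
Definition Jim s : 'M[C]_(s + s) := block_mx 0 'i%:M 'i%:M 0.

Lemma hr_pair_diag_adj s (X Y : 'M[C]_s) d :
  hr_pair X Y d -> hr_pair (diag_adj X) (diag_adj Y) d.
Proof.
case=> XY YX; rewrite /hr_pair /diag_adj !mxH_block !mxH0 !mxHK !mulmx_block.
rewrite !(mulmx0, mul0mx, addr0, add0r) !add_block_mx !(addr0, add0r) XY YX.
by rewrite -scalar_mx_block.
Qed.

Lemma hr_pair_diag_adj_Jre s (X : 'M[C]_s) : hr_pair (diag_adj X) (Jre s) 0.
Proof.
rewrite /hr_pair /diag_adj /Jre !mxH_block !mxH0 !mxHK !mxHN !mxH1 !mulmx_block.
rewrite !(mulmx0, mul0mx, mulmx1, mul1mx, mulmxN, mulNmx, addr0, add0r).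
by rewrite !add_block_mx !(addr0, add0r, addrN, addNr) block_mx0 raddf0.
Qed.

Lemma hr_pair_diag_adj_Jim s (X : 'M[C]_s) : hr_pair (diag_adj X) (Jim s) 0.
Proof.
rewrite /hr_pair /diag_adj /Jim !mxH_block !mxH0 !mxHK !mxH_scalar conjCi.
rewrite !mulmx_block !(mulmx0, mul0mx, addr0, add0r) !mul_mx_scalar !mul_scalar_mx.
by rewrite !add_block_mx !scaleNr !(addr0, add0r, addrN, addNr) block_mx0 raddf0.
Qed.

Lemma scalar_mx2 s : (2%:M : 'M[C]_(s + s)) = block_mx (1%:M + 1%:M) 0 0 (1%:M + 1%:M).
Proof. by rewrite (scalar_mx_block s s) -raddfD. Qed.

Lemma hr_pair_Jre s : hr_pair (Jre s) (Jre s) 2.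
Proof.
rewrite /hr_pair /Jre !mxH_block !mxH0 !mxHN !mxH1 !mulmx_block.
rewrite !(mulmx0, mul0mx, mulmx1, mul1mx, mulmxN, mulNmx, addr0, add0r, opprK).
by rewrite !add_block_mx !(addr0, add0r) scalar_mx2.
Qed.

Lemma hr_pair_Jim s : hr_pair (Jim s) (Jim s) 2.
Proof.
rewrite /hr_pair /Jim !mxH_block !mxH0 !mxH_scalar conjCi !mulmx_block.
rewrite !(mulmx0, mul0mx, addr0, add0r) -!scalar_mxM mulrN mulNr -expr2 sqrCi opprK.
by rewrite !add_block_mx !(addr0, add0r) scalar_mx2.
Qed.

Lemma hr_pair_Jre_Jim s : hr_pair (Jre s) (Jim s) 0.
Proof.
rewrite /hr_pair /Jre /Jim !mxH_block !mxH0 !mxHN !mxH1 !mxH_scalar conjCi.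
rewrite !mulmx_block !(mulmx0, mul0mx, mulmx1, mul1mx, mulmxN, mulNmx, addr0, add0r).
by rewrite !add_block_mx !raddfN /= !(addr0, add0r, addrN, addNr, opprK) block_mx0 raddf0.
Qed.

Lemma hurwitz_radon_ext s (E E' : nat -> 'M[C]_s) K :
  (forall j, (j < K)%N -> E j = E' j) -> hurwitz_radon E K -> hurwitz_radon E' K.
Proof. by move=> EE' HE a b aK bK; rewrite -!EE' //; apply: HE. Qed.

(* With K variables, E_0..E_(K-1) are real and E_K..E_(2K-1) imaginary parts;
   a new variable puts its real part at index K and its imaginary part last. *)
Definition hr_step s (E : nat -> 'M[C]_s) (K j : nat) : 'M[C]_(s + s) :=
  if j == K then Jre s else if j == K.*2.+1 then Jim s
  else diag_adj (E (if (j < K)%N then j else j.-1)).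

Lemma hurwitz_radon_step s (E : nat -> 'M[C]_s) K :
  hurwitz_radon E K.*2 -> hurwitz_radon (hr_step E K) K.*2.+2.
Proof.
move=> HE a b aK bK; rewrite /hr_step.
case: (eqVneq a K) => [aK'|aK']; case: (eqVneq b K) => [bK'|bK']; try subst a; try subst b.
- by rewrite eqxx; apply: hr_pair_Jre.
- rewrite [K == b]eq_sym (negPf bK'); case: ifP => _; first exact: hr_pair_Jre_Jim.
  exact/hr_pair_sym/hr_pair_diag_adj_Jre.
- rewrite (negPf aK'); case: ifP => _; first exact/hr_pair_sym/hr_pair_Jre_Jim.
  exact: hr_pair_diag_adj_Jre.
case: (eqVneq a K.*2.+1) => [aI|aI]; case: (eqVneq b K.*2.+1) => [bI|bI];
  try subst a; try subst b.
- by rewrite eqxx; apply: hr_pair_Jim.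
- by rewrite eq_sym (negPf bI); apply/hr_pair_sym/hr_pair_diag_adj_Jim.
- by rewrite (negPf aI); apply: hr_pair_diag_adj_Jim.
set a' := if (a < K)%N then a else a.-1; set b' := if (b < K)%N then b else b.-1.
have a'K : (a' < K.*2)%N by rewrite /a'; case: (ltnP a K) => ?; lia.
have b'K : (b' < K.*2)%N by rewrite /b'; case: (ltnP b K) => ?; lia.
have -> : (a == b) = (a' == b').
  by rewrite /a' /b'; case: (ltnP a K); case: (ltnP b K) => ? ?; apply/eqP/eqP; lia.
exact/hr_pair_diag_adj/HE.
Qed.

Lemma hurwitz_radon_clifford s (E : nat -> 'M[C]_s) K :
  hurwitz_radon E K.+1 -> clifford (fun i : 'I_K => mxH (E 0%N) *m E i.+1).
Proof.
have unitary a : (a < K.+1)%N -> hurwitz_radon E K.+1 ->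
    mxH (E a) *m E a = 1%:M /\ E a *m mxH (E a) = 1%:M.
  move=> aK /(_ a a aK aK); rewrite eqxx.
  have two_inj (Y : 'M[C]_s) : Y + Y = 2%:M -> Y = 1%:M.
    move=> Y2; apply: (@scalerI _ _ 2%:R); first by rewrite pnatr_eq0.
    by rewrite scaler_nat mulr2n Y2 scalemx1.
  by case=> /two_inj ? /two_inj.
move=> HE; have U a aK := unitary a aK HE.
have iK (i : 'I_K) : (i.+1 < K.+1)%N := ltn_ord i.
have anti a b : (a < K.+1)%N -> (b < K.+1)%N -> a != b ->
    mxH (E a) *m E b = - (mxH (E b) *m E a).
  move=> aK bK ab; case: (HE a b aK bK); rewrite (negPf ab) raddf0 => ab0 _.
  by apply/eqP; rewrite -addr_eq0 ab0.
have GG (i j : 'I_K) : (mxH (E 0%N) *m E i.+1) *m (mxH (E 0%N) *m E j.+1) =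
                        - (mxH (E i.+1) *m E j.+1).
  rewrite (anti 0%N i.+1 _ (iK i)) // mulNmx -!mulmxA (mulmxA (E 0%N)).
  by rewrite (proj2 (U 0%N _)) // mul1mx.
split.
- by move=> i; rewrite GG (proj1 (U _ (iK i))).
- by move=> i j ij; rewrite !GG (anti i.+1 j.+1) ?opprK.
- move=> i; rewrite mxHM mxHK -!mulmxA (mulmxA (E i.+1)).
  by rewrite (proj2 (U _ (iK i))) mul1mx (proj1 (U 0%N _)).
Qed.

End HurwitzRadon.

Section Designs.
Variable C : numClosedFieldType.

Lemma sz_exp k : sz k = (2 ^ k)%N.
Proof. by elim: k => //= k ->; rewrite expnS mul2n addnn. Qed.

Lemma Emx_Cdes_step k j : (j < (k.+1).*2.+2)%N ->
  Emx k.+2 (Cdes C k.+1) j = hr_step (Emx k.+1 (Cdes C k)) k.+1 j.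
Proof.
move=> jK; rewrite /hr_step /Emx.
case: (eqVneq j k.+1) => [->|jk].
  by rewrite ltnS leqnn /= ltnn eqxx /Jre add_block_mx !(addr0, add0r).
case: (eqVneq j (k.+1).*2.+1) => [->|jk2].
  have -> : ((k.+1).*2.+1 < k.+2)%N = false by apply/negbTE; rewrite -leqNgt; lia.
  have -> : ((k.+1).*2.+1 - k.+2)%N = k.+1 by lia.
  rewrite /= ltnn eqxx /Jim opp_block_mx add_block_mx scale_block_mx.
  by rewrite !(oppr0, addr0, add0r, scaler0, opprK) !scalemx1.
case: (ltnP j k.+1) => jk1.
  rewrite ltnS (ltnW jk1) /= jk1 /diag_adj add_block_mx !(addr0, add0r) mxHD.
  by rewrite [X in block_mx _ _ _ X = _]addrC.
have -> : (j < k.+2)%N = false by apply/negbTE; rewrite -leqNgt; lia.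
have -> : (j.-1 < k.+1)%N = false by apply/negbTE; rewrite -leqNgt; lia.
have -> : (j.-1 - k.+1)%N = (j - k.+2)%N by lia.
have jk2' : (j - k.+2 < k.+1)%N by lia.
rewrite /= jk2' /diag_adj opp_block_mx add_block_mx scale_block_mx !(oppr0, addr0, add0r, scaler0).
by rewrite mxHZ conjCi mxHB scaleNr -scalerN opprB.
Qed.

Lemma hurwitz_radon_Cdes k : hurwitz_radon (Emx k.+1 (Cdes C k)) (k.+1).*2.
Proof.
elim: k => [|k IH]; last first.
  apply: hurwitz_radon_ext (hurwitz_radon_step IH) => j jK.
  by rewrite Emx_Cdes_step.
have E0 : Emx 1 (Cdes C 0) 0 = 1%:M by rewrite /Emx /= addr0.
have E1 : Emx 1 (Cdes C 0) 1 = 'i%:M by rewrite /Emx /= subr0 scalemx1.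
move=> [|[|a]] [|[|b]] // _ _; rewrite ?E0 ?E1 /hr_pair /= !mxH_scalar ?conjC1 ?conjCi.
all: split; rewrite ?(mul1mx, mulmx1) ?mul_mx_scalar ?scale_scalar_mx -?raddfD /=.
all: rewrite ?(mulNr, mulrN, addrN, addNr) -?expr2 ?sqrCi ?opprK -?mulr2n; reflexivity.
Qed.

Lemma clifford_Cdes k : clifford (Gmx k.+1 (Cdes C k)).
Proof.
apply: hurwitz_radon_clifford.
have -> : ((2 * k.+1).-1).+1 = (k.+1).*2 by lia.
exact: hurwitz_radon_Cdes.
Qed.

Lemma Emx_Cminus k j : Emx k.+1 (Cminus C k) j =
  if j == k.*2.+1 then - Emx k.+1 (Cdes C k) j else Emx k.+1 (Cdes C k) j.
Proof.
rewrite /Emx /Cminus; case: (ltnP j k.+1) => jk.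
  have -> : (j == k.*2.+1) = false by apply/negbTE; lia.
  by case: (j == k) => //=; rewrite addrC.
have -> : ((j - k.+1)%N == k) = (j == k.*2.+1) by apply/eqP/eqP; lia.
by case: (j == _) => //=; rewrite -scalerN opprB.
Qed.

Lemma Gmx_Cminus k (i : 'I_(2 * k.+1).-1) : Gmx k.+1 (Cminus C k) i =
  if i == k.*2 :> nat then - Gmx k.+1 (Cdes C k) i else Gmx k.+1 (Cdes C k) i.
Proof. by rewrite /Gmx !Emx_Cminus eqSS /=; case: (_ == _); rewrite ?mulmxN. Qed.

End Designs.

Theorem lemma3 (C : numClosedFieldType) (k' : nat) :
  sz k' = (2 ^ k')%N /\
  is_unitary_rep (Gmx k'.+1 (Cdes C k')) /\
  is_unitary_rep (Gmx k'.+1 (Cminus C k')) /\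
  irreducible_rep (Gmx k'.+1 (Cdes C k')) /\
  irreducible_rep (Gmx k'.+1 (Cminus C k')) /\
  ~ equivalent_reps (Gmx k'.+1 (Cdes C k')) (Gmx k'.+1 (Cminus C k')).
Proof.
have dim : (sz k' * sz k' = 2 ^ k'.*2)%N by rewrite sz_exp -expnD addnn.
split; first exact: sz_exp.
move: (Gmx k'.+1 (Cminus C k')) (@Gmx_Cminus C k') (clifford_Cdes C k').
move: (Gmx k'.+1 (Cdes C k')).
have -> : (2 * k'.+1).-1 = k'.*2.+1 by lia.
move=> G G' GG' HG.
have flip i : G' i = if i == ord_max then - G i else G i by rewrite GG'.
split; first exact: clifford_unitary_rep.
split; first exact/clifford_unitary_rep/(clifford_flip flip).
split; first exact: clifford_irreducible dim.
by split; [exact: flip_irreducible flip | exact: flip_not_equivalent flip].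
Qed.
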